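(* Let $T\in(0,\infty]$, let $f\in C([0,T)\times\bar U_K)$ be tilted (i.e. for every $t$, and all $x,y\in\bar U_K$ with $y-x\in\bar U_K^*$, one has $f(t,x)\le f(t,y)$), let $(t,x)\in(0,T)\times\partial U_K$, and let $\phi\in C^\infty((0,T)\times\bar U_K)$ be such that $(t,x)$ is a local maximum of $f-\phi$. Then \[ \inf_{\nu\in\mathbf n(x)}\nu\cdot\nabla\phi(t,x)\le0. \]
   Context: Fix integers $D,K\ge1$. Either $\mathcal C=(0,\infty)^D$, $\bar{\mathcal C}=\mathbb{R}_+^D$, $\mathcal E=\mathbb{R}^D$ with the Euclidean inner product, or $\mathcal C=S^D_{++}$ (positive definite symmetric $D\times D$ matrices), $\bar{\mathcal C}=S^D_+$ (positive semidefinite), $\mathcal E=S^D$ with $a\cdot b=\mathrm{tr}(a^*b)$; $|a|=(a\cdot a)^{1/2}$ and $x\le y$ means $y-x\in\bar{\mathcal C}$. $U_K=\{x=(x_1,\dots,x_K)\in\mathcal C^K: x_{k+1}-x_k\in\mathcal C\ \forall k\le K-1\}$, $\bar U_K=\{x\in\bar{\mathcal C}^K: x_1\le\dots\le x_K\}$ (its closure), $\partial U_K=\bar U_K\setminus U_K$. On $\mathcal E^K$, $x\cdot y=\sum_k x_k\cdot y_k$, $|x|=(x\cdot x)^{1/2}$, $\bar U_K^*=\{x\in\mathcal E^K: x\cdot v\ge0\ \forall v\in\bar U_K\}$, and for $x\in\partial U_K$, $\mathbf n(x)=\{\nu\in\mathcal E^K:|\nu|=1,\ (y-x)\cdot\nu\le0\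 \forall y\in\bar U_K\}$. $\nabla\phi=(\partial_{x_1}\phi,\dots,\partial_{x_K}\phi)$. *)

From HB Require Import structures.
From mathcomp Require Import all_boot all_order all_algebra.
From mathcomp Require Import all_classical all_reals all_analysis.
Set Implicit Arguments. Unset Strict Implicit. Unset Printing Implicit Defensive.
Import Order.TTheory GRing.Theory Num.Theory.
Import numFieldNormedType.Exports.
Local Open Scope classical_set_scope.
Local Open Scope ring_scope.

(* The two settings of the paper:
   Orthant : C = (0,oo)^D,  E = R^D  (an element of E is a 1 x D row matrix)
   PSD     : C = S^D_{++},  E = S^D  (an element of E is a D x D matrix)     *)
Inductive setting := Orthant | PSD.

Definition Edim (s : setting) (D : nat) : nat :=
  match s with Orthant => 1%N | PSD => D end.

(* A point x = (x_1,...,x_K) of E^K is represented (inside an ambient matrix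
   space) as a (K * Edim s D) x D matrix, whose k-th block is x_k. *)
Definition EK (R : realType) (s : setting) (K D : nat) :=
  'M[R]_(K * Edim s D, D).

Definition comp (R : realType) (s : setting) (K D : nat) (k : 'I_K)
  (x : EK R s K D) : 'M[R]_(Edim s D, D) :=
  \matrix_(i < Edim s D, j < D) x (mxvec_index k i) j.

Definition inE (R : realType) (s : setting) (D : nat) : 'M[R]_(Edim s D, D) -> Prop :=
  match s return 'M[R]_(Edim s D, D) -> Prop with
  | Orthant => fun _ => True
  | PSD => fun a => a^T = a
  end.

Definition inC (R : realType) (s : setting) (D : nat) : 'M[R]_(Edim s D, D) -> Prop :=
  match s return 'M[R]_(Edim s D, D) -> Prop with
  | Orthant => fun a => forall j, 0 < a ord0 j
  | PSD => fun a => a^T = a /\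
      forall v : 'rV[R]_D, v != 0 -> 0 < (v *m a *m v^T) ord0 ord0
  end.

Definition inCbar (R : realType) (s : setting) (D : nat) : 'M[R]_(Edim s D, D) -> Prop :=
  match s return 'M[R]_(Edim s D, D) -> Prop with
  | Orthant => fun a => forall j, 0 <= a ord0 j
  | PSD => fun a => a^T = a /\
      forall v : 'rV[R]_D, 0 <= (v *m a *m v^T) ord0 ord0
  end.

Definition inEK (R : realType) (s : setting) (K D : nat) (x : EK R s K D) : Prop :=
  forall k : 'I_K, inE (comp k x).

Definition U (R : realType) (s : setting) (K D : nat) : set (EK R s K D) :=
  [set x | (forall k : 'I_K, inC (comp k x)) /\
           (forall (k : 'I_K) (h : (k.+1 < K)%N),
               inC (comp (Ordinal h) x - comp k x))].

Arguments U {R} s K D.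

Definition Ubar (R : realType) (s : setting) (K D : nat) : set (EK R s K D) :=
  [set x | (forall k : 'I_K, inCbar (comp k x)) /\
           (forall (k : 'I_K) (h : (k.+1 < K)%N),
               inCbar (comp (Ordinal h) x - comp k x))].

Arguments Ubar {R} s K D.

Definition bdU (R : realType) (s : setting) (K D : nat) : set (EK R s K D) :=
  Ubar s K D `\` U s K D.

Arguments bdU {R} s K D.

(* inner product on E^K: sum_k x_k . y_k, with a . b = tr(a^* b) in the PSD
   case and the Euclidean product in the orthant case; both equal the sum of
   the entrywise products. *)
Definition dotEK (R : realType) (s : setting) (K D : nat) (x y : EK R s K D) : R :=
  \sum_(i < K * Edim s D) \sum_(j < D) x i j * y i j.

Definition normEK (R : realType) (s : setting) (K D : nat) (x : EK R s K D) : R :=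
  Num.sqrt (dotEK x x).

Definition Ubar_dual (R : realType) (s : setting) (K D : nat) : set (EK R s K D) :=
  [set x | inEK x /\ forall v, Ubar s K D v -> 0 <= dotEK x v].

Arguments Ubar_dual {R} s K D.

Definition normals (R : realType) (s : setting) (K D : nat) (x : EK R s K D)
  : set (EK R s K D) :=
  [set nu | inEK nu /\ normEK nu = 1 /\
            forall y, Ubar s K D y -> dotEK (y - x) nu <= 0].

Definition tilted (R : realType) (s : setting) (K D : nat) (T : \bar R)
  (f : R * EK R s K D -> R) : Prop :=
  forall t, 0 <= t -> (t%:E < T)%E ->
  forall x y, Ubar s K D x -> Ubar s K D y -> Ubar_dual s K D (y - x) ->
  f (t, x) <= f (t, y).

Fixpoint iter_dder (R : realType) (V : normedModType R) (vs : seq V) (g : V -> R)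
  : V -> R :=
  match vs with
  | [::] => g
  | v :: vs' => fun p => derive (iter_dder vs' g) p v
  end.

Definition smooth_on (R : realType) (V : normedModType R) (O : set V) (g : V -> R)
  : Prop :=
  open O /\ forall (vs : seq V) (p : V), O p -> differentiable (iter_dder vs g) p.

Definition dot_grad (R : realType) (s : setting) (K D : nat)
  (phi : R * EK R s K D -> R) (t : R) (x nu : EK R s K D) : R :=
  derive phi (t, x) (0, nu).

From Pilot Require Import Defs.
From HB Require Import structures.
From mathcomp Require Import all_boot all_order all_algebra.
From mathcomp Require Import all_classical all_reals all_analysis.
From mathcomp Require Import ring lra.
Import Order.TTheory GRing.Theory Num.Theory.
Import numFieldNormedType.Exports.
Local Open Scope classical_set_scope.
Local Open Scope ring_scope.
Set Implicit Arguments. Unset Strict Implicit. Unset Printing Implicit Defensive.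

(* Write z_k = x_k - x_(k-1) (with x_0 = 0): x lies in \bar U_K iff every z_k
   lies in \bar C, and on the boundary some z_k is not in C.  For each k let
   S_k be the projector onto the face of \bar C exposed at z_k (the zero
   coordinates of z_k, resp. the kernel of z_k) and d_k = S_k - S_(k+1), so
   that d . v = sum_k S_k . z_k(v).  Then d is a nonzero element of
   \bar U_K^* orthogonal to x, hence -d/|d| is an outer normal at x, and
   x + h d stays in \bar U_K for small h > 0.  As f is tilted,
   f(t,x) <= f(t, x + h d), and the local maximum of f - phi then gives
   phi(t,x) <= phi(t, x + h d): the derivative of phi along d is
   nonnegative. *)

Section FrobeniusProduct.
Variable R : realType.

Definition mxdot m n (a b : 'M[R]_(m, n)) : R := \sum_i \sum_j a i j * b i j.

Lemma dotEK_mxdot s K D (x y : EK R s K D) : dotEK x y = mxdot x y.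
Proof. by []. Qed.

Variables m n : nat.
Implicit Types a b c : 'M[R]_(m, n).

Lemma mxdotC a b : mxdot a b = mxdot b a.
Proof. by apply: eq_bigr => i _; apply: eq_bigr => j _; rewrite mulrC. Qed.

Lemma mxdotDl a b c : mxdot (a + b) c = mxdot a c + mxdot b c.
Proof.
rewrite /mxdot -big_split; apply: eq_bigr => i _; rewrite -big_split.
by apply: eq_bigr => j _; rewrite mxE mulrDl.
Qed.

Lemma mxdotZl k a b : mxdot (k *: a) b = k * mxdot a b.
Proof.
rewrite /mxdot mulr_sumr; apply: eq_bigr => i _; rewrite mulr_sumr.
by apply: eq_bigr => j _; rewrite mxE mulrA.
Qed.

Lemma mxdotNl a b : mxdot (- a) b = - mxdot a b.
Proof. by rewrite -scaleN1r mxdotZl mulN1r. Qed.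

Lemma mxdotBl a b c : mxdot (a - b) c = mxdot a c - mxdot b c.
Proof. by rewrite mxdotDl mxdotNl. Qed.

Lemma mxdotDr a b c : mxdot a (b + c) = mxdot a b + mxdot a c.
Proof. by rewrite !(mxdotC a) mxdotDl. Qed.

Lemma mxdotZr k a b : mxdot a (k *: b) = k * mxdot a b.
Proof. by rewrite !(mxdotC a) mxdotZl. Qed.

Lemma mxdotNr a b : mxdot a (- b) = - mxdot a b.
Proof. by rewrite !(mxdotC a) mxdotNl. Qed.

Lemma mxdotBr a b c : mxdot a (b - c) = mxdot a b - mxdot a c.
Proof. by rewrite mxdotDr mxdotNr. Qed.

Lemma mxdot0l a : mxdot 0 a = 0.
Proof. by rewrite -(scale0r 0) mxdotZl mul0r. Qed.

Lemma mxdot0r a : mxdot a 0 = 0.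
Proof. by rewrite mxdotC mxdot0l. Qed.

Lemma mxdot_ge0 a : 0 <= mxdot a a.
Proof. by apply: sumr_ge0 => i _; apply: sumr_ge0 => j _; rewrite -expr2 sqr_ge0. Qed.

Lemma mxdot_entry_le a i j : a i j ^+ 2 <= mxdot a a.
Proof.
have sq_ge0 (k : 'I_m) (l : 'I_n) : 0 <= a k l * a k l by rewrite -expr2 sqr_ge0.
rewrite /mxdot (bigD1 i) //= (bigD1 j) //= expr2 -addrA lerDl.
by rewrite addr_ge0 ?sumr_ge0 // => k _; rewrite sumr_ge0.
Qed.

Lemma mxdot_eq0 a : (mxdot a a == 0) = (a == 0).
Proof.
apply/eqP/eqP => [a0|->]; last exact: mxdot0l.
apply/matrixP => i j; rewrite mxE; apply/eqP; rewrite -sqrf_eq0 eq_le sqr_ge0 andbT.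
by rewrite -a0 mxdot_entry_le.
Qed.

Lemma mxdot_trace a b : mxdot a b = \tr (a *m b^T).
Proof.
rewrite /mxtrace; apply: eq_bigr => i _; rewrite mxE.
by apply: eq_bigr => j _; rewrite mxE.
Qed.

End FrobeniusProduct.

Lemma mxdot_row (R : realType) n (u w : 'rV[R]_n) : mxdot u w = (u *m w^T) 0 0.
Proof. by rewrite mxdot_trace /mxtrace big_ord1. Qed.

Section Cones.
Variables (R : realType) (s : setting) (D : nat).
Local Notation M := 'M[R]_(Edim s D, D).
Implicit Types a b : M.

Lemma inEB a b : Defs.inE a -> Defs.inE b -> Defs.inE (a - b).
Proof. by case: s a b => //= a b ha hb; rewrite linearB /= ha hb. Qed.

Lemma inEZ k a : Defs.inE a -> Defs.inE (k *: a).
Proof. by case: s a => //= a ha; rewrite linearZ /= ha. Qed.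

Lemma inCbarD a b : inCbar a -> inCbar b -> inCbar (a + b).
Proof.
case: s a b => /= a b; first by move=> ha hb j; rewrite mxE addr_ge0.
move=> [ha1 ha2] [hb1 hb2]; split; first by rewrite linearD /= ha1 hb1.
by move=> v; rewrite mulmxDr mulmxDl mxE addr_ge0.
Qed.

Lemma inC_addr a b : inC a -> inCbar b -> inC (a + b).
Proof.
case: s a b => /= a b; first by move=> ha hb j; rewrite mxE ltr_pwDl.
move=> [ha1 ha2] [hb1 hb2]; split; first by rewrite linearD /= ha1 hb1.
by move=> v hv; rewrite mulmxDr mulmxDl mxE ltr_pwDl // ha2.
Qed.

(* In the orthant case a 0/1 row stands for the diagonal of a coordinate projection. *)
Definition projector : M -> Prop :=
  match s as s' return 'M[R]_(Edim s' D, D) -> Prop with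
  | Orthant => fun A => forall j, A ord0 j = 0 \/ A ord0 j = 1
  | PSD => fun A => A^T = A /\ A *m A = A
  end.

Lemma projector0 : projector 0.
Proof.
rewrite /projector; case: s => /=; last by rewrite trmx0 mul0mx.
by move=> j; left; rewrite mxE.
Qed.

Lemma projector_inE A : projector A -> Defs.inE A.
Proof. by rewrite /projector; case: s A => //= A []. Qed.

(* The last clause keeps x + h d in \bar U_K: the k-th increment of the
   direction d built below is (S_k - S_(k+1)) + (S_k - S_(k-1)). *)
Definition face_projector (z S : M) : Prop :=
  [/\ projector S, forall y, inCbar y -> 0 <= mxdot S y, mxdot S z = 0,
      ~ inC z -> S != 0 &
      \forall e \near 0^'+, forall A B, projector A -> projector B ->
        inCbar (z + e *: ((S - A) + (S - B)))].

End Cones.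

Lemma orthant_face_projector (R : realType) D (z : 'M[R]_(1, D)) :
  @inCbar R Orthant D z -> exists S, @face_projector R Orthant D z S.
Proof.
move=> /= hz; pose S : 'rV[R]_D := \row_j (z ord0 j == 0)%:R; exists S; split => /=.
- by move=> j; rewrite mxE; case: eqP; [right | left].
- move=> y hy; rewrite /mxdot big_ord1; apply: sumr_ge0 => j _.
  by rewrite mxE mulr_ge0.
- rewrite /mxdot big_ord1 big1 // => j _; rewrite mxE.
  by case: eqP => [->|]; rewrite ?mulr0 ?mul0r.
- move=> zNpos; apply/negP => /eqP S0; apply: zNpos => j.
  rewrite lt_def hz andbT; apply/negP => /eqP zj0.
  move: (congr1 (fun S : 'M[R]_(1, D) => S ord0 j) S0).
  by rewrite !mxE zj0 eqxx => /eqP; rewrite oner_eq0.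
suff : \forall e \near 0^'+, forall j A B,
    @projector R Orthant D A -> @projector R Orthant D B ->
    0 <= (z + e *: ((S - A) + (S - B))) ord0 j.
  by apply: filterS => e he A B hA hB j; apply: he.
apply: filter_forall => j; have [zj0|zj_neq0] := eqVneq (z ord0 j) 0.
  near=> e => A B hA hB; rewrite !mxE zj0 eqxx add0r.
  have e0 : 0 < e by near: e; exact: nbhs_right_gt.
  by case: (hA j) => ->; case: (hB j) => -> /=; nra.
have zj_gt0 : 0 < z ord0 j by rewrite lt_def zj_neq0 hz.
near=> e => A B hA hB; rewrite !mxE (negbTE zj_neq0) /=.
have e0 : 0 < e by near: e; exact: nbhs_right_gt.
have ez : e <= z ord0 j / 2 by near: e; apply: nbhs_right_le; rewrite divr_gt0.
by case: (hA j) => ->; case: (hB j) => ->; nra.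
Unshelve. all: by end_near.
Qed.

Section SymmetricMatrices.
Variable R : realType.

Lemma sym_mulmx_eq0 n m (z : 'M[R]_n) (Y : 'M[R]_(n, m)) :
  z^T = z -> z *m (z *m Y) = 0 -> z *m Y = 0.
Proof.
move=> zT zzY; apply/eqP; rewrite -mxdot_eq0 mxdot_trace mxtrace_mulC.
by rewrite trmx_mul zT -mulmxA zzY mulmx0 mxtrace0.
Qed.

Lemma sym_expmx_mulmx_eq0 n m (z : 'M[R]_n.+1) (Y : 'M[R]_(n.+1, m)) k :
  z^T = z -> z ^+ k.+1 *m Y = 0 -> z *m Y = 0.
Proof.
move=> zT; elim: k => [|k IHk] zkY; first by rewrite expr1 in zkY.
have zXS j : z ^+ j.+1 *m Y = z *m (z ^+ j *m Y) by rewrite mulmxA exprS.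
by apply: IHk; rewrite zXS; apply: sym_mulmx_eq0; rewrite // -!zXS.
Qed.

Lemma horner_mx_sym n (z : 'M[R]_n.+1) p :
  z^T = z -> (horner_mx z p)^T = horner_mx z p.
Proof.
move=> zT; elim/poly_ind: p => [|p c IHp]; first by rewrite rmorph0 trmx0.
have zpC : z *m horner_mx z p = horner_mx z p *m z := comm_mx_horner p (erefl _).
rewrite rmorphD rmorphM /= horner_mx_X horner_mx_C linearD /= -mulmxE trmx_mul.
by rewrite zT IHp tr_scalar_mx zpC.
Qed.

(* The pseudo-inverse is a polynomial in z, read off from the characteristic
   polynomial X^m q with q(0) != 0. *)
Lemma sym_pseudo_inverse n (z : 'M[R]_n.+1) : z^T = z ->
  exists B : 'M[R]_n.+1, [/\ B^T = B, z *m B = B *m z & z *m z *m B = z].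
Proof.
move=> zT.
have [m [q q0_neq0 chiE]] := multiplicity_XsubC (char_poly z) 0.
rewrite (monic_neq0 (char_poly_monic z)) /= in q0_neq0.
have zq : z *m horner_mx z q = 0.
  have := Cayley_Hamilton z.
  rewrite chiE rmorphM rmorphXn /= polyC0 subr0 horner_mx_X.
  case: m {chiE} => [|m]; first by rewrite expr0 mulr1 => ->; rewrite mulmx0.
  move=> zmq; apply: (@sym_expmx_mulmx_eq0 _ _ _ _ m zT).
  have zX_comm : comm_mx (z ^+ m.+1) z by rewrite /comm_mx !mulmxE -exprSr -exprS.
  by rewrite (comm_mx_horner q zX_comm) mulmxE.
have [h qE] : exists h, q = h * 'X + (q.[0])%:P.
  have : root (q - (q.[0])%:P) 0 by rewrite /root hornerD hornerN hornerC subrr.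
  case/factor_theorem => h; rewrite polyC0 subr0 => hE.
  by exists h; rewrite -hE subrK.
set H := horner_mx z h.
have Hz : H *m z = z *m H := esym (comm_mx_horner h (erefl _)).
have zzH : z *m z *m H = - q.[0] *: z.
  move: zq; rewrite {1}qE rmorphD rmorphM /= horner_mx_X horner_mx_C -mulmxE.
  rewrite mulmxDr mul_mx_scalar Hz mulmxA => /eqP.
  by rewrite addr_eq0 => /eqP ->; rewrite scaleNr.
exists (- (q.[0])^-1 *: H); split.
- by rewrite linearZ /= horner_mx_sym.
- by rewrite -scalemxAl -scalemxAr Hz.
- by rewrite -scalemxAr zzH scalerA mulrNN mulVf ?scale1r.
Qed.

Lemma mxdot_mulmx_le n (M : 'M[R]_n) :
  exists2 C, 0 < C & forall u : 'rV[R]_n, mxdot (u *m M) u <= C * mxdot u u.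
Proof.
exists (1 + \sum_i \sum_j `|M i j|).
  by rewrite ltr_pwDl // sumr_ge0 // => i _; rewrite sumr_ge0.
move=> u; rewrite mulrDl mul1r; apply: ler_wpDl; first exact: mxdot_ge0.
have -> : mxdot (u *m M) u = \sum_i \sum_j u 0 i * M i j * u 0 j.
  rewrite /mxdot big_ord1; under eq_bigr do rewrite mxE mulr_suml.
  by rewrite exchange_big.
rewrite mulr_suml; apply: ler_sum => i _; rewrite mulr_suml; apply: ler_sum => j _.
have ui := mxdot_entry_le u 0 i; have uj := mxdot_entry_le u 0 j.
have uij_le : u 0 i * u 0 j <= mxdot u u by nra.
have uij_ge : - (u 0 i * u 0 j) <= mxdot u u by nra.
by case: (lerP 0 (M i j)) => hM; [rewrite ger0_norm | rewrite ltr0_norm]; nra.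
Qed.

End SymmetricMatrices.

Section Projectors.
Variables (R : realType) (n : nat).
Implicit Types (P A y : 'M[R]_n) (v : 'rV[R]_n).

Definition orth_projector P := P^T = P /\ P *m P = P.

Lemma orth_projector_mxdot P v : orth_projector P ->
  mxdot (v *m P) v = mxdot (v *m P) (v *m P).
Proof.
by case=> PT PP; rewrite !mxdot_row trmx_mul PT mulmxA -(mulmxA v P P) PP.
Qed.

Lemma orth_projector_pythagoras P v : orth_projector P ->
  mxdot v v = mxdot (v *m P) (v *m P) + mxdot (v - v *m P) (v - v *m P).
Proof.
move=> hP; have cross : mxdot (v *m P) (v - v *m P) = 0.
  by rewrite mxdotBr -orth_projector_mxdot // subrr.
have vE : v = v *m P + (v - v *m P) by rewrite addrC subrK.
rewrite [in LHS]vE; move: (v - v *m P) cross => r; move: (v *m P) => p cross.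
by rewrite mxdotDl !mxdotDr cross mxdotC cross addr0 add0r.
Qed.

Lemma orth_projector_quad_le P A v : orth_projector P -> orth_projector A ->
  mxdot (v *m A) v <= mxdot (v *m P) v + mxdot (v - v *m P) (v - v *m P).
Proof.
move=> hP hA; rewrite !orth_projector_mxdot // -orth_projector_pythagoras //.
by rewrite (orth_projector_pythagoras v hA) lerDl mxdot_ge0.
Qed.

Lemma orth_projector_mxdot_ge0 P y : orth_projector P -> y^T = y ->
  (forall v, 0 <= mxdot (v *m y) v) -> 0 <= mxdot P y.
Proof.
move=> [PT PP] yT y_psd.
rewrite mxdot_trace yT -{1}PP -{1}PT -mulmxA mxtrace_mulC.
apply: sumr_ge0 => k _; apply: le_trans (y_psd (row k P)) _.
by rewrite mxdot_row tr_row colE !mulmxA -!row_mul -colE !mxE.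
Qed.

End Projectors.

Section PSDFace.
Variable R : realType.

Lemma psd_range_projector n (z : 'M[R]_n.+1) :
  z^T = z -> (forall v : 'rV[R]_n.+1, 0 <= mxdot (v *m z) v) ->
  exists Q, [/\ orth_projector Q, z *m Q = z &
    exists2 c, 0 < c & forall v : 'rV[R]_n.+1,
      c * mxdot (v *m Q) (v *m Q) <= mxdot (v *m z) v].
Proof.
move=> zT z_psd; have [B [BT zB zzB]] := sym_pseudo_inverse zT.
have [Q zBQ] : {Q | z *m B = Q} by exists (z *m B).
have BzQ : B *m z = Q by rewrite -zB.
have QT : Q^T = Q by rewrite -zBQ trmx_mul BT zT.
have BQ : B *m Q = Q *m B by rewrite -zBQ mulmxA -zB.
have zQ : z *m Q = z by rewrite -zBQ mulmxA.
have QQ : Q *m Q = Q by rewrite -{1}BzQ -mulmxA zQ.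
exists Q; split => //; have [C C0 hC] := mxdot_mulmx_le B.
exists C^-1; first by rewrite invr_gt0.
move=> w; set y := C^-1; pose u := w *m B.
have uz : u *m z = w *m Q by rewrite -mulmxA BzQ.
have wzu : mxdot (w *m z) u = mxdot (w *m Q) w.
  by rewrite !mxdot_row trmx_mul BT !mulmxA -(mulmxA w) zBQ.
have wQu : mxdot (w *m Q) u = mxdot (w *m Q *m B) (w *m Q).
  rewrite !mxdot_row !trmx_mul BT QT !mulmxA -(mulmxA _ B Q) BQ mulmxA.
  by rewrite -(mulmxA w Q Q) QQ.
have wyuz : (w - y *: u) *m z = w *m z - y *: (w *m Q).
  by rewrite mulmxBl -scalemxAl uz.
(* Positivity of the form at w - y w B, with y = 1/C, is a Cauchy-Schwarz argument. *)
have := z_psd (w - y *: u).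
rewrite wyuz !(mxdotBl, mxdotBr, mxdotZl, mxdotZr).
rewrite wzu wQu (orth_projector_mxdot (P := Q)) //.
have y0 : 0 < y by rewrite invr_gt0.
have yyaC : y * (y * mxdot (w *m Q *m B) (w *m Q)) <=
    y * (y * (C * mxdot (w *m Q) (w *m Q))).
  by do 2 (apply: ler_wpM2l; first exact: ltW); apply: hC.
rewrite (mulrA y C) mulVf ?gt_eqF // mul1r in yyaC.
nra.
Qed.

Lemma psd_face_projector n (z : 'M[R]_n.+1) :
  @inCbar R PSD n.+1 z -> exists S, @face_projector R PSD n.+1 z S.
Proof.
move=> [zT z_psd].
have {}z_psd (v : 'rV[R]_n.+1) : 0 <= mxdot (v *m z) v by rewrite mxdot_row.
have [Q [[QT QQ] zQ [c c0 hc]]] := psd_range_projector zT z_psd.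
pose P : 'M[R]_n.+1 := 1%:M - Q.
have hP : orth_projector P.
  split; first by rewrite linearB /= QT trmx1.
  by rewrite mulmxBl mul1mx mulmxBr mulmx1 QQ subrr subr0.
have zP : z *m P = 0 by rewrite mulmxBr mulmx1 zQ subrr.
have vQ v : v *m Q = v - v *m P by rewrite mulmxBr mulmx1 opprB addrC subrK.
clearbody P; exists P; split => //.
- by move=> y [yT y_psd]; apply: orth_projector_mxdot_ge0 => // v; rewrite mxdot_row.
- rewrite mxdot_trace zT mxtrace_mulC zP; exact: mxtrace0.
- move=> zNpd; apply/negP => /eqP P0; apply: zNpd; split => // v v0.
  rewrite -mxdot_row; apply: lt_le_trans (hc v); rewrite vQ P0 mulmx0 subr0.
  by rewrite mulr_gt0 // lt_def mxdot_eq0 v0 mxdot_ge0.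
near=> e => A B [AT AA] [BT BB]; split.
  by rewrite !raddfD /= !linearZ /= !raddfN /= zT AT BT (proj1 hP).
move=> v; rewrite -mxdot_row mulmxDr mxdotDl -scalemxAr mxdotZl.
rewrite !(mulmxDr, mulmxN, mxdotDl, mxdotNl).
have e0 : 0 < e by near: e; exact: nbhs_right_gt.
have ec : e * 2 <= c.
  by rewrite -ler_pdivlMr //; near: e; apply: nbhs_right_le; rewrite divr_gt0.
have hA := orth_projector_quad_le v hP (conj AT AA).
have hB := orth_projector_quad_le v hP (conj BT BB).
have hz := hc v; rewrite vQ in hz.
have r0 := mxdot_ge0 (v - v *m P).
move: (mxdot (v - v *m P) _) hA hB hz r0 => r hA hB hz r0.
have := ler_wpM2r r0 ec; have := ler_wpM2l (ltW e0) (lerD hA hB).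
nra.
Unshelve. all: by end_near.
Qed.

End PSDFace.

Lemma exists_face_projector (R : realType) s D (z : 'M[R]_(Edim s D, D)) :
  (0 < D)%N -> inCbar z -> exists S, face_projector z S.
Proof.
case: s z => z D0; first exact: orthant_face_projector.
by case: D D0 z => // n _ z; exact: psd_face_projector.
Qed.

Section Blocks.
Variables (R : realType) (s : setting) (K D : nat).
Local Notation M := 'M[R]_(Edim s D, D).
Local Notation EK := (EK R s K D).
Implicit Types (x y : EK) (S : 'I_K -> M).

(* Blocks are numbered from 1, with the paper's convention x_0 = 0; blocks
   beyond K are 0 as well. *)
Definition blk (n : nat) x : M :=
  if n is n'.+1 then oapp (fun k : 'I_K => Defs.comp k x) 0 (insub n') else 0.

Definition incr (n : nat) x : M := blk n.+1 x - blk n x.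

Lemma blk_ord (k : 'I_K) x : blk k.+1 x = Defs.comp k x.
Proof. by rewrite /= valK. Qed.

Lemma blk0 x : blk 0 x = 0.
Proof. by []. Qed.

Lemma blk_out n x : (K <= n)%N -> blk n.+1 x = 0.
Proof. by move=> Kn; rewrite /= insubF // ltnNge Kn. Qed.

Lemma compD k x y : Defs.comp k (x + y) = Defs.comp k x + Defs.comp k y.
Proof. by apply/matrixP => i j; rewrite !mxE. Qed.

Lemma compZ k a x : Defs.comp k (a *: x) = a *: Defs.comp k x.
Proof. by apply/matrixP => i j; rewrite !mxE. Qed.

Lemma blkD n x y : blk n (x + y) = blk n x + blk n y.
Proof.
by case: n => [|n] /=; [rewrite addr0 | case: insub => [k|] /=; rewrite ?compD ?addr0].
Qed.

Lemma blkZ n a x : blk n (a *: x) = a *: blk n x.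
Proof.
by case: n => [|n] /=; [rewrite scaler0 | case: insub => [k|] /=; rewrite ?compZ ?scaler0].
Qed.

Lemma incrD n x y : incr n (x + y) = incr n x + incr n y.
Proof. by rewrite /incr !blkD addrACA opprD. Qed.

Lemma incrZ n a x : incr n (a *: x) = a *: incr n x.
Proof. by rewrite /incr !blkZ scalerBr. Qed.

Lemma incr_succ (k : 'I_K) (h : (k.+1 < K)%N) x :
  incr k.+1 x = Defs.comp (Ordinal h) x - Defs.comp k x.
Proof. by rewrite /incr (blk_ord (Ordinal h)) blk_ord. Qed.

Lemma Ubar_incr x : Ubar s K D x -> forall k : 'I_K, inCbar (incr k x).
Proof.
case=> x_ge0 x_incr k; case: k => [[|k] hk].
  by rewrite /incr blk0 subr0 (blk_ord (Ordinal hk)).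
by rewrite (@incr_succ (Ordinal (ltnW hk)) hk); apply: x_incr.
Qed.

Lemma incr_Ubar x : (forall k : 'I_K, inCbar (incr k x)) -> Ubar s K D x.
Proof.
move=> x_incr; split=> [k|k hk]; last by rewrite -incr_succ; apply: (x_incr (Ordinal hk)).
suff blk_ge0 n : (n < K)%N -> inCbar (blk n.+1 x) by rewrite -blk_ord; apply: blk_ge0.
elim: n => [|n IHn] hn; first by have := x_incr (Ordinal hn); rewrite /incr blk0 subr0.
rewrite -(subrK (blk n.+1 x) (blk n.+2 x)); apply: inCbarD; last exact/IHn/ltnW.
exact: (x_incr (Ordinal hn)).
Qed.

Lemma bdU_incr x : bdU s K D x -> exists k : 'I_K, ~ inC (incr k x).
Proof.
case=> xU xNU; apply: contrapT => x_incrN; apply: xNU.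
have x_incr (k : 'I_K) : inC (incr k x).
  by apply: contrapT => hk; apply: x_incrN; exists k.
split=> [k|k hk]; last by rewrite -incr_succ; apply: (x_incr (Ordinal hk)).
case: k => [[|k] hk].
  by have := x_incr (Ordinal hk); rewrite /incr blk0 subr0 (blk_ord (Ordinal hk)).
rewrite -blk_ord -(subrK (blk k.+1 x) (blk k.+2 x)).
apply: inC_addr; first exact: (x_incr (Ordinal hk)).
by rewrite (blk_ord (Ordinal (ltnW hk))); apply: xU.1.
Qed.

Definition mkEK (F : 'I_K -> M) : EK :=
  \matrix_(r, j) (mxvec (\matrix_(k < K, i < Edim s D) F k i j)) ord0 r.

Lemma comp_mkEK F k : Defs.comp k (mkEK F) = F k.
Proof. by apply/matrixP => i j; rewrite !mxE mxvecE mxE. Qed.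

Lemma dotEK_blocks x y : dotEK x y = \sum_(k < K) mxdot (Defs.comp k x) (Defs.comp k y).
Proof.
rewrite /dotEK (reindex _ (curry_mxvec_bij _ _)) /= [RHS]pair_bigA /=.
by apply: eq_bigr => -[k i] _ /=; apply: eq_bigr => j _; rewrite !mxE.
Qed.

Definition ext S (n : nat) : M := oapp S 0 (insub n).

Lemma ext_ord S (k : 'I_K) : ext S k = S k.
Proof. by rewrite /ext valK. Qed.

Lemma ext_out S n : (K <= n)%N -> ext S n = 0.
Proof. by move=> Kn; rewrite /ext insubF // ltnNge Kn. Qed.

(* The direction whose tail sums are S, i.e. the adjoint of x |-> (incr k x)_k. *)
Definition incr_adjoint S : EK := mkEK (fun k => ext S k - ext S k.+1).

Lemma blk_incr_adjoint S n : blk n.+1 (incr_adjoint S) = ext S n - ext S n.+1.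
Proof.
have [nK|Kn] := ltnP n K; last by rewrite blk_out // !ext_out ?subr0 // ltnW.
by rewrite (blk_ord (Ordinal nK)) comp_mkEK.
Qed.

Lemma incr_incr_adjoint S n :
  incr n (incr_adjoint S) = (ext S n - ext S n.+1) + (ext S n - ext S n.-1).
Proof.
rewrite /incr blk_incr_adjoint; case: n => [|n]; first by rewrite blk0 subr0 subrr addr0.
by rewrite blk_incr_adjoint opprB.
Qed.

Lemma mxdot_sum_by_parts m n (T b : nat -> 'M[R]_(m, n)) N :
  T N = 0 -> b 0%N = 0 ->
  \sum_(k < N) mxdot (T k - T k.+1) (b k.+1) = \sum_(k < N) mxdot (T k) (b k.+1 - b k).
Proof.
move=> TN b0; under eq_bigr do rewrite mxdotBl.
under [RHS]eq_bigr do rewrite mxdotBr.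
rewrite !sumrB; congr (_ - _).
have : \sum_(k < N.+1) mxdot (T k) (b k) = \sum_(k < N.+1) mxdot (T k) (b k) by [].
rewrite {1}big_ord_recr big_ord_recl /= TN b0 mxdot0l mxdot0r addr0 add0r.
by move=> ->.
Qed.

Lemma dotEK_incr_adjoint S v :
  dotEK (incr_adjoint S) v = \sum_(k < K) mxdot (S k) (incr k v).
Proof.
rewrite dotEK_blocks; under eq_bigr do rewrite comp_mkEK -blk_ord.
under [RHS]eq_bigr do rewrite -ext_ord.
by apply: (mxdot_sum_by_parts (T := ext S) (b := blk^~ v)); rewrite ?ext_out.
Qed.

End Blocks.

Section Direction.
Variables (R : realType) (s : setting) (K D : nat).
Local Notation EK := (EK R s K D).

Lemma inward_dual_direction (x : EK) : (0 < D)%N -> bdU s K D x ->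
  exists d : EK, [/\ Ubar_dual s K D d, d != 0, dotEK d x = 0 &
    \forall h \near 0^'+, Ubar s K D (h *: d + x)].
Proof.
move=> D0 xbd; have x_incr := Ubar_incr xbd.1.
have [S S_face] := fin_all_exists (fun k => exists_face_projector D0 (x_incr k)).
have ext_proj n : projector (ext S n).
  have [nK|Kn] := ltnP n K; last by rewrite ext_out //; exact: projector0.
  by rewrite (ext_ord S (Ordinal nK)); case: (S_face (Ordinal nK)).
exists (incr_adjoint S); split.
- split=> [k|v vU]; first by rewrite comp_mkEK; apply: inEB; apply: projector_inE.
  rewrite dotEK_incr_adjoint; apply: sumr_ge0 => k _.
  by case: (S_face k) => _ + _ _ _; apply; apply: Ubar_incr.
- have [k0 hk0] := bdU_incr xbd; case: (S_face k0) => _ _ _ /(_ hk0) + _.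
  apply: contraNN => /eqP d0; rewrite -ext_ord.
  have ext_succ n : ext S n = ext S n.+1.
    apply/eqP; rewrite -subr_eq0 -blk_incr_adjoint d0.
    by rewrite -(scale0r (0 : EK)) blkZ scale0r.
  have ext_add m n : ext S n = ext S (n + m).
    by elim: m => [|m IHm]; rewrite ?addn0 // IHm addnS ext_succ.
  by rewrite (ext_add (K - k0)%N) subnKC ?ext_out // ltnW.
- by rewrite dotEK_incr_adjoint big1 // => k _; case: (S_face k).
have : \forall h \near 0^'+, forall k : 'I_K, forall A B, projector A -> projector B ->
    inCbar (incr k x + h *: ((S k - A) + (S k - B))).
  by apply: filter_forall => k; case: (S_face k).
apply: filterS => h near_h; apply: incr_Ubar => k.
rewrite incrD incrZ incr_incr_adjoint addrC ext_ord; exact: near_h.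
Qed.

Lemma normals_dual_direction (x d : EK) :
  Ubar_dual s K D d -> d != 0 -> dotEK d x = 0 -> normals x (- (normEK d)^-1 *: d).
Proof.
move=> [dE d_dual] d0 dx; have dd_gt0 : 0 < dotEK d d.
  by rewrite lt_def dotEK_mxdot mxdot_eq0 d0 mxdot_ge0.
have nd_gt0 : 0 < normEK d by rewrite sqrtr_gt0.
split; [|split].
- by move=> k; rewrite compZ; apply: inEZ.
- rewrite /normEK !dotEK_mxdot mxdotZl mxdotZr -!dotEK_mxdot mulrA -expr2 sqrrN.
  by rewrite exprVn sqr_sqrtr ?ltW // mulVf ?gt_eqF // sqrtr1.
- move=> y yU; have dx' : mxdot d x = 0 := dx.
  rewrite dotEK_mxdot mxdotZr mxdotBl (mxdotC x) dx' subr0 mxdotC.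
  by rewrite mulNr oppr_le0 mulr_ge0 //; [rewrite invr_ge0 ltW | exact: d_dual].
Qed.

End Direction.

Section OneSidedDerivative.
Variables (R : realType) (V : normedModType R).

Lemma near_at_right_shift (P : set V) (p v : V) :
  (\forall q \near p, P q) -> \forall h \near 0^'+, P (h *: v + p).
Proof.
have : (fun h : R => h *: v + p) @ 0^'+ --> p.
  apply: cvg_at_right_filter; rewrite -{2}[p]add0r -(scale0r v).
  by apply: cvgD; [apply: cvgZr_tmp; exact: cvg_id | exact: cvg_cst].
by apply.
Qed.

Lemma derive_ge0_at_right (g : V -> R) (p v : V) : derivable g p v ->
  (\forall h \near 0^'+, g p <= g (h *: v + p)) -> 0 <= 'D_v g p.
Proof.
move=> dg g_incr; rewrite /derive cvg_at_rightE //; apply: limr_ge.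
  exact: cvgP (cvg_dnbhs_at_right dg).
near=> h; rewrite /= /shift; apply: mulr_ge0.
  by rewrite invr_ge0 ltW //; near: h; exact: nbhs_right_gt.
by rewrite subr_ge0; near: h.
Unshelve. all: by end_near.
Qed.

End OneSidedDerivative.

Theorem proposition3p6 (R : realType) (s : setting) (D K : nat)
  (hD : (1 <= D)%N) (hK : (1 <= K)%N)
  (T : \bar R) (hT : (0%:E < T)%E)
  (f : R * EK R s K D -> R)
  (hfc : {within [set p : R * EK R s K D | 0 <= p.1 /\ (p.1%:E < T)%E /\
                                            Ubar s K D p.2],
          continuous f})
  (hft : tilted T f)
  (t : R) (x : EK R s K D)
  (ht : 0 < t) (htT : (t%:E < T)%E) (hx : bdU s K D x)
  (phi : R * EK R s K D -> R)
  (hphi : exists O : set (R * EK R s K D),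
      [set p | 0 < p.1 /\ (p.1%:E < T)%E /\ Ubar s K D p.2] `<=` O /\
      smooth_on O phi)
  (hmax : \forall p \near (t, x),
      (0 < p.1 /\ (p.1%:E < T)%E /\ Ubar s K D p.2) ->
      f p - phi p <= f (t, x) - phi (t, x)) :
  (ereal_inf [set (dot_grad phi t x nu)%:E | nu in normals x] <= 0%:E)%E.
Proof.
have [Ophi [sub_O [_ phi_smooth]]] := hphi.
have dphi : differentiable phi (t, x).
  exact: (phi_smooth [::] (t, x) (sub_O (t, x) (conj ht (conj htT hx.1)))).
have [d [d_dual d0 dx d_in]] := inward_dual_direction hD hx.
have nu_normal := normals_dual_direction d_dual d0 dx.
apply: ereal_inf_le; exists (dot_grad phi t x (- (normEK d)^-1 *: d))%:E.
  by exists (- (normEK d)^-1 *: d).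
rewrite lee_fin /dot_grad.
have -> : ((0 : R), - (normEK d)^-1 *: d) = - (normEK d)^-1 *: ((0 : R), d).
  by congr pair; rewrite /= scaler0.
rewrite deriveE // linearZ /= -deriveE // scaleNr oppr_le0; apply: mulr_ge0.
  by rewrite invr_ge0 sqrtr_ge0.
apply: derive_ge0_at_right; first exact: diff_derivable.
have := near_at_right_shift ((0 : R), d) hmax; apply: filter_app.
have shiftE h : h *: ((0 : R), d) + (t, x) = (t, h *: d + x).
  by congr pair => /=; rewrite scaler0 add0r.
move: d_in; apply: filter_app; near=> h; rewrite shiftE => hU hmax_h.
have f_le : f (t, x) <= f (t, h *: d + x).
  apply: hft => //; [exact: ltW | exact: hx.1 | rewrite addrK].
  split=> [k|v vU]; first by rewrite compZ; apply: inEZ; case: d_dual.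
  by rewrite dotEK_mxdot mxdotZl mulr_ge0 ?d_dual.2 // ltW //;
    near: h; exact: nbhs_right_gt.
have := hmax_h (conj ht (conj htT hU)); lra.
Unshelve. all: by end_near.
Qed.
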